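(* Let $p$ be a positive integer, let $q,s$ be positive integers with $4q=9s$, let $r_1,\dots,r_p$ be positive integers with $\gcd(r_i,2q)=1$, and let $t$ be a positive integer with $\gcd(t,3s)=1$. Let $\Omega=\{(U,V)\in\mathbb R^2:a<UV<b\}$ with $-\infty\le a<0<b\le\infty$ and $S^{4p+5}=\{(z,w,x)\in\mathbb C^p\times\mathbb C^p\times\mathbb C^3:|z|^2+|w|^2+|x|^2=1\}$. Define $K_2:\Omega\times S^{4p+5}\to\Omega\times S^{4p+5}$ by $K_2(U,V,z,w,x_1,x_2,x_3)=(V,U,w,\zeta z,x_2,x_3,\omega x_1)$, where $(\zeta z)_j=e^{i\pi r_j/q}z_j$ and $\omega=e^{2\pi i t/(3s)}$. Then $K_2$ generates a cyclic group of order $4q=9s$ acting freely and properly discontinuously on $\Omega\times S^{4p+5}$; moreover $K_2^2$ acts trivially on $\Omega$ and generates a cyclic group of order $2q$ acting freely on $S^{4p+5}$. In particular the smallest admissible $q$ is $9$.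
   Context: In Myers–Perry angle coordinates ($z_j=\mu_je^{i\theta_j}$, $w_j=\nu_je^{i\varphi_j}$, $x_k=\rho_ke^{i\psi_k}$), $K_2$ maps $(U,V,\mu,\nu,\rho_1,\rho_2,\rho_3,\theta,\varphi,\psi_1,\psi_2,\psi_3)$ to $(V,U,\nu,\mu,\rho_2,\rho_3,\rho_1,\varphi,\theta+(\pi/q)r,\psi_2,\psi_3,\psi_1+2\pi t/(3s))$. In the paper this models the $D=4p+7$ Myers–Perry(-AdS) black hole with angular momentum in $\theta_i$ equal to minus that in $\varphi_i$ and vanishing angular momenta in the $\psi_k$, for which $K_2$ is an isometry and the quotient is a rotating geon. *)

From mathcomp Require Import all_boot.
From Stdlib Require Import Reals.
From Coquelicot Require Import Rbar.

Set Implicit Arguments.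
Unset Strict Implicit.
Local Open Scope R_scope.

(* Complex numbers as pairs (Re, Im). *)
Definition C := (R * R)%type.
Definition Cmul (u v : C) : C :=
  ((u.1 * v.1 - u.2 * v.2), (u.1 * v.2 + u.2 * v.1)).
Definition Csub (u v : C) : C := ((u.1 - v.1), (u.2 - v.2)).
Definition Cnorm2 (u : C) : R := (u.1 * u.1 + u.2 * u.2).
Definition cis (theta : R) : C := (cos theta, sin theta).

Record sph (p : nat) := Sph {
  sz : 'I_p -> C; sw : 'I_p -> C; sx1 : C; sx2 : C; sx3 : C }.

Definition sqnorm (p : nat) (S : sph p) : R :=
  ((\big[Rplus/0]_(j < p) Cnorm2 (sz S j)) + (\big[Rplus/0]_(j < p) Cnorm2 (sw S j))
   + Cnorm2 (sx1 S) + Cnorm2 (sx2 S) + Cnorm2 (sx3 S)).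

Definition inSphere (p : nat) (S : sph p) : Prop := sqnorm S = 1%R.

Definition sph_dist2 (p : nat) (S T : sph p) : R :=
  sqnorm (Sph (fun j => Csub (sz S j) (sz T j)) (fun j => Csub (sw S j) (sw T j))
              (Csub (sx1 S) (sx1 T)) (Csub (sx2 S) (sx2 T)) (Csub (sx3 S) (sx3 T))).

Definition pt (p : nat) := ((R * R) * sph p)%type.

Definition pt_dist2 (p : nat) (P Q : pt p) : R :=
  ((P.1.1 - Q.1.1) ^ 2 + (P.1.2 - Q.1.2) ^ 2 + sph_dist2 P.2 Q.2).

Definition inOmega (a b : Rbar) (UV : R * R) : Prop :=
  Rbar_lt a (Finite (UV.1 * UV.2)) /\ Rbar_lt (Finite (UV.1 * UV.2)) b.

Definition inM (p : nat) (a b : Rbar) (P : pt p) : Prop :=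
  inOmega a b P.1 /\ inSphere P.2.

Definition K2 (p q s : nat) (r : 'I_p -> nat) (t : nat) (P : pt p) : pt p :=
  let U := P.1.1 in let V := P.1.2 in let S := P.2 in
  ((V, U),
   Sph (sw S)
       (fun j => Cmul (cis (PI * INR (r j) / INR q)) (sz S j))
       (sx2 S) (sx3 S)
       (Cmul (cis (2 * PI * INR t / INR (3 * s)%nat)) (sx1 S))).

Definition generates_cyclic_of_order (T : Type) (M : T -> Prop) (f : T -> T)
    (n : nat) : Prop :=
  (0 < n)%nat /\
  (forall x, M x -> M (f x)) /\
  (forall x, M x -> iter n f x = x) /\
  (forall k, (0 < k < n)%nat -> exists x, M x /\ iter k f x <> x).

Definition acts_freely (T : Type) (M : T -> Prop) (f : T -> T) : Prop :=
  forall k x, M x -> iter k f x = x -> forall y, M y -> iter k f y = y.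

(* The group generated by f acts properly discontinuously on M (with the
   topology induced by the distance d): every point of M has a neighbourhood
   B (a d-ball intersected with M) with g B ∩ B = ∅ for every non-identity
   element g of the group. *)
Definition acts_properly_discontinuously (T : Type) (M : T -> Prop)
    (d2 : T -> T -> R) (f : T -> T) : Prop :=
  forall x, M x -> exists eps : R, (0 < eps) /\
    forall k, (exists y, M y /\ iter k f y <> y) ->
      forall y, M y -> (d2 x y < eps) -> ~ (d2 x (iter k f y) < eps).

(* K2^2 fixes (U, V) and multiplies z_j and w_j by e^{i pi r_j / q}; K2^3 multiplies
   every x_k by omega = e^{2 pi i t / 3s}; and K2^{4q} = K2^{9s} is the identity.
   Suppose 0 < k < 4q and K2^k fixes a point of the sphere, so some coordinate is
   nonzero.  On a z_j or w_j coordinate, K2^{2k} fixes it, so 2q | r_j k, hence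
   2q | k and k = 2q; then K2^{2q} multiplies it by e^{i pi r_j} = -1 as r_j is odd.
   On an x coordinate, K2^{3k} fixes it, so 3s | t k, hence k = 3sc; then
   K2^{3sc} fixes it, so 3 | c and 9s | k.  Both are impossible, so the group
   <K2> of order 4q acts freely.  Being a finite group of isometries acting freely,
   it is properly discontinuous: a ball whose radius is below the least
   displacement of a point by a nontrivial element is moved off itself. *)

From Pilot Require Import Defs.
From Stdlib Require Import Reals Lra Lia Psatz FunctionalExtensionality.
From HB Require Import structures.
From mathcomp Require Import all_boot zify.
From Coquelicot Require Import Rbar.

Set Implicit Arguments.
Unset Strict Implicit.
Local Open Scope R_scope.

Lemma cos_eq1_2kPI x : cos x = 1 -> exists k : Z, x = 2 * IZR k * PI.
Proof.
move=> cos_x; have := cos_2a_sin (x / 2).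
replace (2 * (x / 2)) with x by field; rewrite cos_x => h.
have [k Hk] : exists k : Z, x / 2 = IZR k * PI by apply: sin_eq_0_0; nra.
by exists k; lra.
Qed.

Lemma cos_eq1_dvdn (N D : nat) :
  (0 < D)%N -> cos (2 * PI * INR N / INR D) = 1 -> (D %| N)%N.
Proof.
move=> D_gt0 /cos_eq1_2kPI [k Hk].
have D_neq0 : INR D <> 0 by apply: not_0_INR; lia.
have : INR N = IZR k * INR D.
  apply: (Rmult_eq_reg_l (2 * PI)); last by have := PI_RGT_0; lra.
  transitivity (2 * PI * INR N / INR D * INR D); first by field.
  by rewrite Hk; ring.
rewrite !INR_IZR_INZ -mult_IZR => /eq_IZR NkD.
by apply/dvdnP; exists (Z.to_nat k); lia.
Qed.

Lemma cis_mul a b u : Cmul (cis a) (Cmul (cis b) u) = Cmul (cis (a + b)) u.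
Proof. by case: u => x y; rewrite /Cmul /cis /= cos_plus sin_plus; f_equal; ring. Qed.

Lemma Cnorm2_cis a u : Cnorm2 (Cmul (cis a) u) = Cnorm2 u.
Proof.
case: u => x y; rewrite /Cnorm2 /Cmul /cis /=.
by have := sin2_cos2 a; rewrite /Rsqr; nra.
Qed.

Lemma Csub_Cmul c u v : Csub (Cmul c u) (Cmul c v) = Cmul c (Csub u v).
Proof. by case: u v c => [? ?] [? ?] [? ?]; rewrite /Csub /Cmul /=; f_equal; ring. Qed.

Lemma Cnorm2_ge0 u : 0 <= Cnorm2 u.
Proof. by rewrite /Cnorm2; nra. Qed.

Lemma Csub_Cnorm2_eq0 u v : Cnorm2 (Csub u v) = 0 -> u = v.
Proof.
case: u v => [a b] [c d]; rewrite /Cnorm2 /Csub /= => h.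
have := Rle_0_sqr (a - c); have := Rle_0_sqr (b - d); rewrite /Rsqr => ? ?.
by have [-> ->] : a = c /\ b = d by split; nra.
Qed.

Lemma cis_fixed_cos_eq1 th u : Cmul (cis th) u = u -> Cnorm2 u <> 0 -> cos th = 1.
Proof.
case: u => a b; rewrite /Cmul /cis /Cnorm2 /= => -[E1 E2] u_neq0.
have h : (1 - cos th) * (a * a + b * b) =
  a * (a - (cos th * a - sin th * b)) + b * (b - (cos th * b + sin th * a)) by ring.
rewrite E1 E2 !Rminus_diag !Rmult_0_r Rplus_0_r in h.
by case: (Rmult_integral _ _ h); lra.
Qed.

Definition Crot (N D : nat) (u : Defs.C) : Defs.C := Cmul (cis (2 * PI * INR N / INR D)) u.

Lemma CrotD N M D u : Crot N D (Crot M D u) = Crot (N + M) D u.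
Proof. by rewrite /Crot cis_mul plus_INR /Rdiv; congr (Cmul (cis _)); ring. Qed.

Lemma Crot0 D u : Crot 0 D u = u.
Proof.
rewrite /Crot /= /Rdiv Rmult_0_r Rmult_0_l /cis cos_0 sin_0.
by case: u => x y; rewrite /Cmul /=; f_equal; ring.
Qed.

Lemma Crot_id N D u : (0 < D)%N -> (D %| N)%N -> Crot N D u = u.
Proof.
move=> D_gt0 /dvdnP [c ->].
have D_neq0 : INR D <> 0 by apply: not_0_INR; lia.
rewrite /Crot.
have -> : 2 * PI * INR (c * D)%N / INR D = 0 + 2 * INR c * PI by rewrite mult_INR; field.
rewrite /cis cos_period sin_period cos_0 sin_0.
by case: u => x y; rewrite /Cmul /=; f_equal; ring.
Qed.

Lemma Crot_fixed_dvdn N D u :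
  (0 < D)%N -> Cnorm2 u <> 0 -> Crot N D u = u -> (D %| N)%N.
Proof. by move=> D_gt0 u_neq0 /cis_fixed_cos_eq1 /(_ u_neq0); apply: cos_eq1_dvdn. Qed.

Lemma Rplus_associative : associative Rplus.
Proof. by move=> x y z; rewrite Rplus_assoc. Qed.

HB.instance Definition _ :=
  Monoid.isComLaw.Build R 0 Rplus Rplus_associative Rplus_comm Rplus_0_l.

Lemma sumR_ge0 p (F : 'I_p -> R) :
  (forall j, 0 <= F j) -> 0 <= \big[Rplus/0]_(j < p) F j.
Proof. by move=> F_ge0; apply: big_ind => // *; [lra | apply: Rplus_le_le_0_compat]. Qed.

Lemma sumR_eq0 p (F : 'I_p -> R) :
  (forall j, 0 <= F j) -> \big[Rplus/0]_(j < p) F j = 0 <-> forall j, F j = 0.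
Proof.
move=> F_ge0; split=> [|F0]; last by apply: (big_ind (fun x => x = 0)) => // x y -> ->; ring.
move=> sum0 j; move: sum0; rewrite (bigD1 j) //=.
set rest := \big[_/_]_(i < p | _) _.
have : 0 <= rest by apply: big_ind => // *; [lra | apply: Rplus_le_le_0_compat].
by have := F_ge0 j; move=> *; lra.
Qed.

Lemma sumR_le2 p (F G H : 'I_p -> R) : (forall j, F j <= 2 * G j + 2 * H j) ->
  \big[Rplus/0]_(j < p) F j <=
  2 * \big[Rplus/0]_(j < p) G j + 2 * \big[Rplus/0]_(j < p) H j.
Proof.
move=> FGH; apply: (big_ind3 (fun x y z => x <= 2 * y + 2 * z)) => [|*|i _]; [lra | lra | exact: FGH].
Qed.

Lemma sqnorm_ge0 p (S : sph p) : 0 <= sqnorm S.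
Proof.
rewrite /sqnorm; have := sumR_ge0 (fun j => Cnorm2_ge0 (sz S j)).
have := sumR_ge0 (fun j => Cnorm2_ge0 (sw S j)).
by have := Cnorm2_ge0 (sx1 S); have := Cnorm2_ge0 (sx2 S); have := Cnorm2_ge0 (sx3 S); move=> *; lra.
Qed.

Lemma sqnorm_eq0 p (S : sph p) : sqnorm S = 0 <->
  [/\ forall j, Cnorm2 (sz S j) = 0, forall j, Cnorm2 (sw S j) = 0,
      Cnorm2 (sx1 S) = 0, Cnorm2 (sx2 S) = 0 & Cnorm2 (sx3 S) = 0].
Proof.
have sz_eq0 := sumR_eq0 (fun j => Cnorm2_ge0 (sz S j)).
have sw_eq0 := sumR_eq0 (fun j => Cnorm2_ge0 (sw S j)).
have := sumR_ge0 (fun j => Cnorm2_ge0 (sz S j)).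
have := sumR_ge0 (fun j => Cnorm2_ge0 (sw S j)).
have := Cnorm2_ge0 (sx1 S); have := Cnorm2_ge0 (sx2 S); have := Cnorm2_ge0 (sx3 S).
rewrite /sqnorm => *; split=> [sum0 | [/sz_eq0 -> /sw_eq0 -> -> -> ->]]; last by ring.
by split; [apply/sz_eq0 | apply/sw_eq0 | .. ]; lra.
Qed.

Definition sph_sub p (S T : sph p) : sph p :=
  Sph (fun j => Csub (sz S j) (sz T j)) (fun j => Csub (sw S j) (sw T j))
      (Csub (sx1 S) (sx1 T)) (Csub (sx2 S) (sx2 T)) (Csub (sx3 S) (sx3 T)).

Lemma Cnorm2_subC u v : Cnorm2 (Csub u v) = Cnorm2 (Csub v u).
Proof. by rewrite /Cnorm2 /Csub /=; ring. Qed.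

Lemma Cnorm2_sub_le2 u v w :
  Cnorm2 (Csub u w) <= 2 * Cnorm2 (Csub u v) + 2 * Cnorm2 (Csub v w).
Proof.
case: u v w => [a b] [c d] [e f]; rewrite /Cnorm2 /Csub /=.
by have := Rle_0_sqr (a - 2 * c + e); have := Rle_0_sqr (b - 2 * d + f); rewrite /Rsqr; nra.
Qed.

Lemma sph_dist2_ge0 p (S T : sph p) : 0 <= sph_dist2 S T.
Proof. exact: (sqnorm_ge0 (sph_sub S T)). Qed.

Lemma sph_dist2C p (S T : sph p) : sph_dist2 S T = sph_dist2 T S.
Proof.
rewrite /sph_dist2 /sqnorm /=.
rewrite (eq_bigr _ (fun j _ => Cnorm2_subC (sz S j) (sz T j))).
rewrite (eq_bigr _ (fun j _ => Cnorm2_subC (sw S j) (sw T j))).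
by rewrite (Cnorm2_subC (sx1 S)) (Cnorm2_subC (sx2 S)) (Cnorm2_subC (sx3 S)).
Qed.

Lemma sph_dist2_le2 p (S T U : sph p) :
  sph_dist2 S U <= 2 * sph_dist2 S T + 2 * sph_dist2 T U.
Proof.
rewrite /sph_dist2 /sqnorm /=.
have := sumR_le2 (fun j => Cnorm2_sub_le2 (sz S j) (sz T j) (sz U j)).
have := sumR_le2 (fun j => Cnorm2_sub_le2 (sw S j) (sw T j) (sw U j)).
have := Cnorm2_sub_le2 (sx1 S) (sx1 T) (sx1 U).
have := Cnorm2_sub_le2 (sx2 S) (sx2 T) (sx2 U).
have := Cnorm2_sub_le2 (sx3 S) (sx3 T) (sx3 U).
move=> *; simpl in *; lra.
Qed.

Lemma sph_dist2_eq0 p (S T : sph p) : sph_dist2 S T = 0 -> S = T.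
Proof.
case: S T => [z w x1 x2 x3] [z' w' x1' x2' x3'].
move/(sqnorm_eq0 (sph_sub _ _)) => /= [ez ew /Csub_Cnorm2_eq0 -> /Csub_Cnorm2_eq0 ->
  /Csub_Cnorm2_eq0 ->].
have -> : z = z' by apply: functional_extensionality => j; apply: Csub_Cnorm2_eq0.
by have -> : w = w' by apply: functional_extensionality => j; apply: Csub_Cnorm2_eq0.
Qed.

Lemma sq_sub_le2 x y z : (x - z) ^ 2 <= 2 * (x - y) ^ 2 + 2 * (y - z) ^ 2.
Proof. by have := Rle_0_sqr (x - 2 * y + z); rewrite /Rsqr; nra. Qed.

Lemma pt_dist2_ge0 p (P Q : pt p) : 0 <= pt_dist2 P Q.
Proof.
rewrite /pt_dist2; have := sph_dist2_ge0 P.2 Q.2.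
by have := pow2_ge_0 (P.1.1 - Q.1.1); have := pow2_ge_0 (P.1.2 - Q.1.2); move=> *; lra.
Qed.

Lemma pt_dist2C p (P Q : pt p) : pt_dist2 P Q = pt_dist2 Q P.
Proof. by rewrite /pt_dist2 sph_dist2C; ring. Qed.

Lemma pt_dist2_le2 p (P Q T : pt p) :
  pt_dist2 P T <= 2 * pt_dist2 P Q + 2 * pt_dist2 Q T.
Proof.
rewrite /pt_dist2; have := sph_dist2_le2 P.2 Q.2 T.2.
by have := sq_sub_le2 P.1.1 Q.1.1 T.1.1; have := sq_sub_le2 P.1.2 Q.1.2 T.1.2; move=> *; lra.
Qed.

Lemma pt_dist2_eq0 p (P Q : pt p) : pt_dist2 P Q = 0 -> P = Q.
Proof.
case: P Q => [[U V] S] [[U' V'] S']; rewrite /pt_dist2 /=.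
have := pow2_ge_0 (U - U'); have := pow2_ge_0 (V - V').
have := sph_dist2_ge0 S S'; move=> ? ? ? h.
have [eU [eV eS]] : (U - U') ^ 2 = 0 /\ (V - V') ^ 2 = 0 /\ sph_dist2 S S' = 0 by lra.
rewrite (sph_dist2_eq0 eS).
by have [-> ->] : U = U' /\ V = V' by split; nra.
Qed.

Lemma sqnorm_K2 p q s r t (P : pt p) : sqnorm (K2 q s r t P).2 = sqnorm P.2.
Proof.
rewrite /sqnorm /= (eq_bigr _ (fun j _ => Cnorm2_cis _ (sz P.2 j))) Cnorm2_cis.
by ring.
Qed.

Lemma K2_inM p q s r t a b (P : pt p) : inM a b P -> inM a b (K2 q s r t P).
Proof.
case=> -[? ?] S1; split; last by rewrite /inSphere sqnorm_K2.
by rewrite /inOmega /= Rmult_comm.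
Qed.

Lemma pt_dist2_K2 p q s r t (P Q : pt p) :
  pt_dist2 (K2 q s r t P) (K2 q s r t Q) = pt_dist2 P Q.
Proof.
rewrite /pt_dist2 /sph_dist2 /sqnorm /=.
rewrite (eq_bigr _ (fun j _ => f_equal Cnorm2 (Csub_Cmul _ (sz P.2 j) (sz Q.2 j)))).
rewrite (eq_bigr _ (fun j _ => Cnorm2_cis _ (Csub (sz P.2 j) (sz Q.2 j)))).
by rewrite Csub_Cmul Cnorm2_cis; ring.
Qed.

Lemma pt_dist2_iter_K2 p q s r t n (P Q : pt p) :
  pt_dist2 (iter n (K2 q s r t) P) (iter n (K2 q s r t) Q) = pt_dist2 P Q.
Proof. by elim: n => //= n <-; rewrite pt_dist2_K2. Qed.

Lemma iter_semiconj (A B : Type) (f : A -> B) (g : A -> A) (h : B -> B) n x :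
  (forall y, f (g y) = h (f y)) -> f (iter n g x) = iter n h (f x).
Proof. by move=> fgh; elim: n => //= n <-. Qed.

Lemma iter_fixed_mul (A : Type) (f : A -> A) k n x :
  iter k f x = x -> iter (n * k) f x = x.
Proof. by move=> fx; rewrite iterM; apply: iter_fix. Qed.

Lemma iter_modn (A : Type) (f : A -> A) N k x :
  (forall y, iter N f y = y) -> iter k f x = iter (k %% N) f x.
Proof. by move=> fN; rewrite {1}(divn_eq k N) iterD iter_fixed_mul. Qed.

Definition swap (UV : R * R) : R * R := (UV.2, UV.1).

Lemma iter_swap_double m UV : iter m.*2 swap UV = UV.
Proof. by elim: m => // m; rewrite doubleS /= => ->; case: UV. Qed.

(* K2 acts separately on the coordinates (z, w) and x. *)
Definition zw_part p (P : pt p) := (sz P.2, sw P.2).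
Definition x_part p (P : pt p) := (sx1 P.2, sx2 P.2, sx3 P.2).

Definition zw_step p q (r : 'I_p -> nat) (zw : ('I_p -> Defs.C) * ('I_p -> Defs.C)) :=
  (zw.2, fun j => Crot (r j) (2 * q) (zw.1 j)).

Definition x_step s t (x : Defs.C * Defs.C * Defs.C) :=
  (x.1.2, x.2, Crot t (3 * s) x.1.1).

Lemma pt_eq_parts p (P Q : pt p) :
  P.1 = Q.1 -> zw_part P = zw_part Q -> x_part P = x_part Q -> P = Q.
Proof.
case: P Q => [UV [z w x1 x2 x3]] [UV' [z' w' x1' x2' x3']].
by rewrite /zw_part /x_part /= => -> [-> ->] [-> -> ->].
Qed.

Lemma zw_part_K2 p q s r t (P : pt p) : (0 < q)%N ->
  zw_part (K2 q s r t P) = zw_step q r (zw_part P).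
Proof.
move=> q_gt0; have q_neq0 : INR q <> 0 by apply: not_0_INR; lia.
rewrite /zw_part /zw_step /=; congr pair; apply: functional_extensionality => j.
by rewrite /Crot mult_INR; congr (Cmul (cis _)); rewrite /=; field.
Qed.

Lemma iter_zw_step_double p q (r : 'I_p -> nat) m zw :
  iter m.*2 (zw_step q r) zw =
  (fun j => Crot (r j * m) (2 * q) (zw.1 j), fun j => Crot (r j * m) (2 * q) (zw.2 j)).
Proof.
elim: m => [|m IH].
  by case: zw => z w /=; congr pair; apply: functional_extensionality => j; rewrite muln0 Crot0.
rewrite doubleS /= IH /zw_step /=; congr pair; apply: functional_extensionality => j;
  by rewrite CrotD mulnS.
Qed.

Lemma iter_x_step_triple s t l x :
  iter (3 * l) (x_step s t) x =
  (Crot (t * l) (3 * s) x.1.1, Crot (t * l) (3 * s) x.1.2, Crot (t * l) (3 * s) x.2).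
Proof.
elim: l => [|l IH]; first by case: x => [[? ?] ?]; rewrite /= muln0 !Crot0.
by rewrite mulnS iterD IH /x_step /= !CrotD mulnS.
Qed.

(* The hypothesis says that K2^{2m} fixes the coordinate u whenever K2^k does. *)
Lemma zw_coord_eq0 q k rj u :
  (0 < q)%N -> (0 < k < 4 * q)%N -> coprime rj (2 * q) ->
  (forall m, (k %| m.*2)%N -> Crot (rj * m) (2 * q) u = u) -> Cnorm2 u = 0.
Proof.
move=> q_gt0 k_bounds rj_coprime u_fixed.
case: (Req_dec (Cnorm2 u) 0) => // u_neq0; exfalso.
have q2_gt0 : (0 < 2 * q)%N by lia.
have : (2 * q %| k)%N.
  rewrite -(Gauss_dvdr k (_ : coprime (2 * q) rj)) 1?coprime_sym //.
  by apply: (Crot_fixed_dvdn q2_gt0 u_neq0); apply: u_fixed; rewrite -mul2n dvdn_mull.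
case/dvdnP=> c k_eq; have {}k_eq : k = (2 * q)%N.
  by move: k_bounds; rewrite {}k_eq; case: c => [|[|c]] /=; nia.
have : (2 * q %| rj * q)%N.
  by apply: (Crot_fixed_dvdn q2_gt0 u_neq0); apply: u_fixed; rewrite k_eq -mul2n.
rewrite dvdn_pmul2r // => two_dvd_rj.
by have := coprime_dvdl two_dvd_rj rj_coprime; rewrite coprimeMr.
Qed.

Lemma x_coord_eq0 s k t u :
  (0 < s)%N -> (0 < k < 9 * s)%N -> coprime t (3 * s) ->
  (forall l, (k %| 3 * l)%N -> Crot (t * l) (3 * s) u = u) -> Cnorm2 u = 0.
Proof.
move=> s_gt0 k_bounds t_coprime u_fixed.
case: (Req_dec (Cnorm2 u) 0) => // u_neq0; exfalso.
have s3_gt0 : (0 < 3 * s)%N by lia.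
have : (3 * s %| k)%N.
  rewrite -(Gauss_dvdr k (_ : coprime (3 * s) t)) 1?coprime_sym //.
  by apply: (Crot_fixed_dvdn s3_gt0 u_neq0); apply: u_fixed; rewrite dvdn_mull.
case/dvdnP=> c k_eq.
have : (3 * s %| t * (s * c))%N.
  apply: (Crot_fixed_dvdn s3_gt0 u_neq0); apply: u_fixed.
  by rewrite k_eq (_ : (3 * (s * c) = c * (3 * s))%N) //; lia.
rewrite (_ : (t * (s * c) = t * c * s)%N); last by lia.
rewrite dvdn_pmul2r // Gauss_dvdr; last by move: t_coprime; rewrite coprimeMr coprime_sym => /andP[].
by case/dvdnP=> d c_eq; move: k_bounds; rewrite k_eq c_eq; case: d {c_eq} => [|d] /=; nia.
Qed.

Lemma finite_pos_lower_bound (d : nat -> R) N :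
  (forall k, (0 < k < N)%N -> 0 < d k) ->
  exists eps, 0 < eps /\ forall k, (0 < k < N)%N -> eps <= d k.
Proof.
elim: N => [|N IH] d_pos; first by exists 1; split=> [|k]; [lra | lia].
have [k k_bounds|eps [eps_gt0 eps_le]] := IH; first by apply: d_pos; lia.
case: (posnP N) => [N0|N_gt0].
  by exists eps; split=> // k k_bounds; apply: eps_le; lia.
exists (Rmin eps (d N)); split; first by apply: Rmin_pos => //; apply: d_pos; lia.
move=> k k_bounds; case: (leqP N k) => [k_ge|k_lt].
- by rewrite (_ : k = N); [apply: Rmin_r | lia].
- by apply: Rle_trans (Rmin_l _ _) (eps_le _ _); lia.
Qed.

Definition sph_pole p : sph p := Sph (fun _ => (0, 0)) (fun _ => (0, 0)) (1, 0) (0, 0) (0, 0).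

Lemma inSphere_pole p : inSphere (sph_pole p).
Proof. by rewrite /inSphere /sqnorm /= !big1 // => *; rewrite /Cnorm2 /=; ring. Qed.

Lemma inOmega_origin a b :
  Rbar_lt a (Finite 0) -> Rbar_lt (Finite 0) b -> inOmega a b (0, 0).
Proof. by rewrite /inOmega /= Rmult_0_l. Qed.

Section K2Dynamics.

Variables (p q s t : nat) (r : 'I_p -> nat).
Hypotheses (q_gt0 : (0 < q)%N) (s_gt0 : (0 < s)%N) (qs : (4 * q = 9 * s)%N).
Hypotheses (r_coprime : forall j, coprime (r j) (2 * q)) (t_coprime : coprime t (3 * s)).

Local Notation K := (K2 q s r t).

Lemma iter_K2_fst n (P : pt p) : (iter n K P).1 = iter n swap P.1.
Proof. exact: iter_semiconj. Qed.

Lemma zw_part_iter_K2 n (P : pt p) : zw_part (iter n K P) = iter n (zw_step q r) (zw_part P).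
Proof. by apply: iter_semiconj => Q; apply: zw_part_K2. Qed.

Lemma x_part_iter_K2 n (P : pt p) : x_part (iter n K P) = iter n (x_step s t) (x_part P).
Proof. exact: iter_semiconj. Qed.

Lemma iter_K2_order (P : pt p) : iter (4 * q) K P = P.
Proof.
have q4 : (4 * q = (2 * q).*2)%N by rewrite -mul2n; lia.
apply: pt_eq_parts.
- by rewrite iter_K2_fst q4 iter_swap_double.
- rewrite zw_part_iter_K2 q4 iter_zw_step_double.
  by rewrite /zw_part; congr pair; apply: functional_extensionality => j;
    rewrite Crot_id ?(dvdn_mull _ (dvdnn _)) //; lia.
- rewrite x_part_iter_K2 (_ : (4 * q = 3 * (3 * s))%N); last by lia.
  have Crot_id3s u : Crot (t * (3 * s)) (3 * s) u = u.
    by rewrite Crot_id ?(dvdn_mull _ (dvdnn _)) //; lia.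
  by rewrite iter_x_step_triple !Crot_id3s; case: (x_part P) => [[? ?] ?].
Qed.

Lemma iter_K2_modn k (P : pt p) : iter k K P = iter (k %% (4 * q)) K P.
Proof. exact: iter_modn iter_K2_order. Qed.

Lemma iter_K2_fixed_sqnorm k (P : pt p) :
  (0 < k < 4 * q)%N -> iter k K P = P -> sqnorm P.2 = 0.
Proof.
move=> k_bounds P_fixed.
have fixed_mul n : (k %| n)%N -> iter n K P = P.
  by case/dvdnP=> c ->; apply: iter_fixed_mul.
have zw_fixed m : (k %| m.*2)%N -> iter m.*2 (zw_step q r) (zw_part P) = zw_part P.
  by move/fixed_mul => Pm; rewrite -zw_part_iter_K2 Pm.
have x_fixed l : (k %| 3 * l)%N -> iter (3 * l) (x_step s t) (x_part P) = x_part P.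
  by move/fixed_mul => Pl; rewrite -x_part_iter_K2 Pl.
have k_bounds9 : (0 < k < 9 * s)%N by rewrite -qs.
apply/sqnorm_eq0; split=> [j|j|||].
- apply: (zw_coord_eq0 q_gt0 k_bounds (r_coprime j)) => m /zw_fixed.
  by rewrite iter_zw_step_double => -[/(congr1 (fun f => f j))].
- apply: (zw_coord_eq0 q_gt0 k_bounds (r_coprime j)) => m /zw_fixed.
  by rewrite iter_zw_step_double => -[_ /(congr1 (fun f => f j))].
- apply: (x_coord_eq0 s_gt0 k_bounds9 t_coprime) => l /x_fixed.
  by rewrite iter_x_step_triple => -[].
- apply: (x_coord_eq0 s_gt0 k_bounds9 t_coprime) => l /x_fixed.
  by rewrite iter_x_step_triple => -[].
- apply: (x_coord_eq0 s_gt0 k_bounds9 t_coprime) => l /x_fixed.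
  by rewrite iter_x_step_triple => -[].
Qed.

Lemma iter_K2_neq k (P : pt p) : inSphere P.2 -> (0 < k < 4 * q)%N -> iter k K P <> P.
Proof.
by move=> P1 k_bounds /(iter_K2_fixed_sqnorm k_bounds); rewrite P1; apply: R1_neq_R0.
Qed.

Lemma iter_K2_fixed_id k (P Q : pt p) : inSphere P.2 -> iter k K P = P -> iter k K Q = Q.
Proof.
move=> P1 P_fixed; rewrite iter_K2_modn.
case: (posnP (k %% (4 * q))) => [-> // | k_gt0]; exfalso.
apply: (iter_K2_neq (k := k %% (4 * q)) P1); last by rewrite -iter_K2_modn.
by rewrite k_gt0 ltn_pmod //; lia.
Qed.

Lemma K2_generates_cyclic a b : Rbar_lt a (Finite 0) -> Rbar_lt (Finite 0) b ->
  generates_cyclic_of_order (inM a b) K (4 * q).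
Proof.
move=> a_lt0 b_gt0; split; first by lia.
split; first by move=> P; apply: K2_inM.
split; first by move=> P _; apply: iter_K2_order.
move=> k k_bounds; exists ((0, 0), sph_pole p); split.
  by split; [apply: inOmega_origin | apply: inSphere_pole].
exact: (iter_K2_neq (P := ((0, 0), sph_pole p)) (inSphere_pole p) k_bounds).
Qed.

Lemma K2_acts_freely a b : acts_freely (inM a b) K.
Proof. by move=> k P [_ P1] P_fixed Q _; apply: iter_K2_fixed_id P_fixed. Qed.

Lemma K2_acts_properly_discontinuously a b :
  acts_properly_discontinuously (inM a b) (@pt_dist2 p) K.
Proof.
move=> P [_ P1].
have [eps [eps_gt0 eps_le]] : exists eps, 0 < eps /\
    forall k, (0 < k < 4 * q)%N -> eps <= pt_dist2 P (iter k K P).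
  apply: finite_pos_lower_bound => k k_bounds.
  case: (Rle_lt_or_eq_dec _ _ (pt_dist2_ge0 P (iter k K P))) => // /esym /pt_dist2_eq0.
  by move/esym/(iter_K2_neq P1 k_bounds).
exists (eps / 4); split=> [|k [Q0 [_ Q0_moved]] Q _ PQ]; first by lra.
rewrite iter_K2_modn; set k' := (k %% (4 * q))%N => PkQ.
have k'_bounds : (0 < k' < 4 * q)%N.
  rewrite ltn_pmod ?andbT; last by lia.
  by rewrite lt0n; apply/eqP => k'0; apply: Q0_moved; rewrite iter_K2_modn -/k' k'0.
have := pt_dist2_le2 P (iter k' K Q) (iter k' K P).
rewrite pt_dist2_iter_K2 (pt_dist2C Q); have := eps_le k' k'_bounds.
by move=> *; lra.
Qed.

Definition K2_sq_sph (S : sph p) : sph p := (iter 2 K ((0, 0), S)).2.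

Lemma iter2_K2 UV (S : sph p) : iter 2 K (UV, S) = (UV, K2_sq_sph S).
Proof. by case: UV. Qed.

Lemma iter_K2_double m UV (S : sph p) : iter m.*2 K (UV, S) = (UV, iter m K2_sq_sph S).
Proof. by elim: m => // m IH; rewrite doubleS (iterD 2 m.*2) IH iter2_K2. Qed.

Lemma K2_sq_sph_fixed k (S : sph p) :
  iter k K2_sq_sph S = S <-> iter k.*2 K ((0, 0), S) = ((0, 0), S).
Proof. by rewrite iter_K2_double; split=> [-> | [->]]. Qed.

Lemma K2_sq_sph_generates_cyclic : generates_cyclic_of_order (@inSphere p) K2_sq_sph (2 * q).
Proof.
split; first by lia.
split; first by move=> S S1; rewrite /inSphere /K2_sq_sph !iterS !sqnorm_K2.
split.
  move=> S _; apply/K2_sq_sph_fixed.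
  by rewrite (_ : (2 * q).*2 = 4 * q)%N ?iter_K2_order // -mul2n; lia.
move=> k k_bounds; exists (sph_pole p); split; first exact: inSphere_pole.
move/K2_sq_sph_fixed; apply: (iter_K2_neq (P := ((0, 0), sph_pole p)) (inSphere_pole p)).
by rewrite -mul2n; lia.
Qed.

Lemma K2_sq_sph_acts_freely : acts_freely (@inSphere p) K2_sq_sph.
Proof.
move=> k S S1 /K2_sq_sph_fixed S_fixed U _; apply/K2_sq_sph_fixed.
exact: iter_K2_fixed_id S_fixed.
Qed.

End K2Dynamics.

Theorem mainTheorem6 :
  (forall (p q s : nat) (r : 'I_p -> nat) (t : nat) (a b : Rbar),
     (0 < p)%nat -> (0 < q)%nat -> (0 < s)%nat -> (4 * q = 9 * s)%nat ->
     (forall j, (0 < r j)%nat /\ gcdn (r j) (2 * q) = 1%nat) ->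
     (0 < t)%nat -> gcdn t (3 * s) = 1%nat ->
     Rbar_lt a (Finite 0) -> Rbar_lt (Finite 0) b ->
     generates_cyclic_of_order (inM a b) (K2 q s r t) (4 * q) /\
     acts_freely (inM a b) (K2 q s r t) /\
     acts_properly_discontinuously (inM a b) (@pt_dist2 p) (K2 q s r t) /\
     exists sigma : sph p -> sph p,
       (forall (UV : R * R) (S : sph p), inOmega a b UV -> inSphere S ->
          iter 2 (K2 q s r t) (UV, S) = (UV, sigma S)) /\
       generates_cyclic_of_order (@inSphere p) sigma (2 * q) /\
       acts_freely (@inSphere p) sigma)
  /\
  ((exists s : nat, (0 < s)%nat /\ (4 * 9 = 9 * s)%nat) /\
   forall q s : nat, (0 < q)%nat -> (0 < s)%nat -> (4 * q = 9 * s)%nat -> (9 <= q)%nat).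
Proof.
split; last by split=> [|q s q_gt0 s_gt0 qs]; [exists 4%N | lia].
move=> p q s r t a b _ q_gt0 s_gt0 qs r_cond _ t_gcd a_lt0 b_gt0.
have r_coprime j : coprime (r j) (2 * q) by rewrite /coprime (r_cond j).2.
have t_coprime : coprime t (3 * s) by rewrite /coprime t_gcd.
split; first exact: K2_generates_cyclic.
split; first exact: K2_acts_freely.
split; first exact: K2_acts_properly_discontinuously.
exists (K2_sq_sph q s t r); split; first by move=> UV S _ _; apply: iter2_K2.
by split; [apply: K2_sq_sph_generates_cyclic | apply: K2_sq_sph_acts_freely].
Qed.
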